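(* Let $G$ be a graph. (1) If $n\geq 3$, then no two distinct vertices of $\uparrow^{n}G$ are strongly cospectral (with respect to the Laplacian). (2) Let $n=2$ and let $u$ be a vertex of $G$ with degree $d_u$. Then the vertices $(0,u)$ and $(1,u)$ are strongly cospectral in $\uparrow^{2}G$ if and only if $d_u\notin\sigma_u(G)$, in which case $$\sigma_{(0,u),(1,u)}^+(\uparrow^{2}G)=2\cdot \sigma_{u}(G)\quad \text{and}\quad \sigma_{(0,u),(1,u)}^-(\uparrow^{2}G)=\{2d_u\}.$$ Moreover, in $\uparrow^{2}G$ the vertex $(0,u)$ can be strongly cospectral only with $(1,u)$.
   Context: All graphs are simple, undirected and unweighted; $L=D-A$ is the Laplacian matrix of a graph, $d_u$ the degree of $u$. For a graph $X$, $\sigma(X)$ is the set of distinct Laplacian eigenvalues, $L(X)=\sum_{\lambda\in\sigma(X)}\lambda E_\lambda$ the spectral decomposition with orthogonal eigenprojections $E_\lambda$, and $\sigma_u(X)=\{\lambda\in\sigma(X):E_\lambda\mathbf{e}_u\neq\mathbf{0}\}$ is the eigenvalue support of vertex $u$. Two vertices $u,v$ of $X$ are strongly cospectral if $E_\lambda\mathbf{e}_u=\pm E_\lambda\mathbf{e}_v$ for every $\lambda\in\sigma_u(X)$; in that case $\sigma^+_{u,v}(X)=\{\lambda:E_\lambda\mathbf{e}_u=E_\lambda\mathbf{e}_v\neq\mathbf{0}\}$ and $\sigma^-_{u,v}(X)=\{\lambda:E_\lambda\mathbf{e}_u=-E_\lambda\mathbf{e}_v\neq\mathbf{0}\}$.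 For a set $S$, $2\cdot S=\{2s:s\in S\}$. The blow-up $\uparrow^{n}G$ has vertex set $\mathbb{Z}_n\times V(G)$, with $(l,u)\sim(m,v)$ iff $u\sim v$ in $G$. *)

From HB Require Import structures.
From mathcomp Require Import all_boot all_order all_algebra.
Set Implicit Arguments. Unset Strict Implicit. Unset Printing Implicit Defensive.
Import Order.TTheory GRing.Theory Num.Theory.
Local Open Scope ring_scope.

(* A simple graph is a symmetric irreflexive relation e on a finite type V.
   Matrices are indexed by 'I_#|V| through enum_rank / enum_val. *)

Definition deg (V : finType) (e : rel V) (u : V) : nat := #|[set w | e u w]|.

Section Spectral.
Variable R : rcfType.

Definition lap (V : finType) (e : rel V) : 'M[R]_#|V| :=
  \matrix_(i, j) ((if i == j then (deg e (enum_val i))%:R else 0)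
                  - (if e (enum_val i) (enum_val j) then 1 else 0)).

Definition orthproj n (B : 'M[R]_n) : 'M[R]_n :=
  let C := row_base B in (C^T *m invmx (C *m C^T)) *m C.

Definition eigproj (V : finType) (e : rel V) (l : R) : 'M[R]_#|V| :=
  orthproj (eigenspace (lap e) l).

Definition Eu (V : finType) (e : rel V) (l : R) (u : V) : 'cV[R]_#|V| :=
  eigproj e l *m delta_mx (enum_rank u) 0.

Definition in_spec (V : finType) (e : rel V) (l : R) : bool := eigenvalue (lap e) l.

Definition in_supp (V : finType) (e : rel V) (u : V) (l : R) : bool :=
  in_spec e l && (Eu e l u != 0).

Definition strongly_cospectral (V : finType) (e : rel V) (u v : V) : Prop :=
  forall l, in_supp e u l -> Eu e l u = Eu e l v \/ Eu e l u = - Eu e l v.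

Definition in_sigma_plus (V : finType) (e : rel V) (u v : V) (l : R) : bool :=
  (Eu e l u == Eu e l v) && (Eu e l u != 0).
Definition in_sigma_minus (V : finType) (e : rel V) (u v : V) (l : R) : bool :=
  (Eu e l u == - Eu e l v) && (Eu e l u != 0).

End Spectral.

(* blow-up: vertex set Z_n x V (Z_n represented by 'I_n), (l,u)~(m,v) iff u~v *)
Definition blowup (n : nat) (V : finType) (e : rel V) : rel ('I_n * V)%type :=
  fun x y => e x.2 y.2.

Definition zero2 : 'I_2 := @Ordinal 2 0 isT.
Definition one2 : 'I_2 := @Ordinal 2 1 isT.
Arguments blowup n {V} e.

(* Write E_mu e_x for the column at x of the eigenprojection of the blow-up
   (E^G_mu e_u for that of G), and call S v = sum_m s (m, v) the fibre sum of
   s : Z_n x V -> R.  An eigenfunction s of the blow-up for mu satisfies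
   (n d_w - mu) s (m, w) = sum_(v ~ w) S v, so S is an eigenfunction of G for
   mu / n, and s is constant on the fibre over w unless mu = n d_w.  Since
   E_mu e_x is the unique mu-eigenfunction z with <s, z> = s x for every
   mu-eigenfunction s, this yields
     E_mu e_(l,u) (m, w)
       = (E^G_(mu/n) e_u) w / n + [mu = n d_u] ([l = m] - 1/n) [w = u].
   At mu = n d_u the second term separates (l, u) from the other vertices of its
   fibre, so a strongly cospectral partner of (l, u) is some (m, u) with m the
   only element of Z_n distinct from l: impossible for n >= 3, and m = 1 - l for
   n = 2.  For n = 2 the formula shows that E_mu e_(0,u) + E_mu e_(1,u) is
   E^G_(mu/2) e_u lifted, while E_mu e_(0,u) - E_mu e_(1,u) vanishes iff
   mu <> 2 d_u. *)

From HB Require Import structures.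
From mathcomp Require Import all_boot all_order all_algebra.
From mathcomp Require Import ring lra.
Set Implicit Arguments. Unset Strict Implicit. Unset Printing Implicit Defensive.
Import Order.TTheory GRing.Theory Num.Theory.
Local Open Scope ring_scope.

Section OrthProj.
Variable R : rcfType.

Lemma row_dot_self_eq0 m (v : 'rV[R]_m) : v *m v^T = 0 -> v = 0.
Proof.
move=> /(congr1 (fun M : 'M[R]_1 => M 0 0)); rewrite !mxE => /eqP.
rewrite psumr_eq0 => [/allP v0|i _]; last by rewrite mxE -expr2 sqr_ge0.
apply/rowP=> i; have := v0 i (mem_index_enum _).
by rewrite !mxE -expr2 sqrf_eq0 => /eqP.
Qed.

Lemma gram_unitmx m n (C : 'M[R]_(m, n)) : row_free C -> C *m C^T \in unitmx.
Proof.
move=> freeC; rewrite -row_free_unit; apply: inj_row_free => v vCC0.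
have /row_dot_self_eq0/eqP : (v *m C) *m (v *m C)^T = 0.
  by rewrite trmx_mul mulmxA -(mulmxA v) vCC0 mul0mx.
by rewrite mulmx_free_eq0 // => /eqP.
Qed.

Lemma orthproj_sub n (B : 'M[R]_n) (w : 'cV_n) : ((orthproj B *m w)^T <= B)%MS.
Proof.
by rewrite /orthproj -!mulmxA trmx_mul trmxK -(eq_row_base B) submxMl.
Qed.

Lemma orthproj_perp n (B : 'M[R]_n) (w : 'cV_n) (r : 'rV_n) :
  (r <= B)%MS -> r *m (w - orthproj B *m w) = 0.
Proof.
rewrite -(eq_row_base B) => /submxP [a ->]; rewrite /orthproj.
have /gram_unitmx := row_base_free B; move: (row_base B) => C CC_unit.
by rewrite mulmxBr -!mulmxA (mulmxA C C^T) (mulmxA (C *m C^T)) mulmxV ?mul1mx ?subrr.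
Qed.

Lemma orthproj_unique n (B : 'M[R]_n) (w z : 'cV_n) :
  (z^T <= B)%MS -> (forall r : 'rV_n, (r <= B)%MS -> r *m (w - z) = 0) ->
  orthproj B *m w = z.
Proof.
move=> zB z_perp; set d := orthproj B *m w - z.
have dB : (d^T <= B)%MS by rewrite linearB /= addmx_sub ?eqmx_opp ?orthproj_sub.
have /row_dot_self_eq0/eqP : d^T *m d^T^T = 0.
  have dE : d = (w - z) - (w - orthproj B *m w).
    by rewrite /d opprB [RHS]addrC addrA subrK.
  by rewrite trmxK {2}dE mulmxBr z_perp // orthproj_perp // subrr.
by rewrite trmx_eq0 subr_eq0 => /eqP.
Qed.

End OrthProj.

Section LaplacianEigenfunctions.
Variables (R : rcfType) (T : finType) (f : rel T).

Definition lap_eigenfun (mu : R) (s : T -> R) : Prop :=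
  forall x, s x * (deg f x)%:R - \sum_(y | f y x) s y = mu * s x.

Lemma lap_eigenfun_ext mu s t : s =1 t -> lap_eigenfun mu s -> lap_eigenfun mu t.
Proof. by move=> st s_eig x; under eq_bigr do rewrite -st; rewrite -!st. Qed.

Lemma lap_eigenfun0 mu : lap_eigenfun mu (fun=> 0).
Proof. by move=> x; rewrite big1 // mul0r subrr mulr0. Qed.

Lemma lap_eigenfun_lin mu a s t : lap_eigenfun mu s -> lap_eigenfun mu t ->
  lap_eigenfun mu (fun x => a * s x + t x).
Proof.
move=> s_eig t_eig x; rewrite big_split /= -mulr_sumr.
transitivity (a * (s x * (deg f x)%:R - \sum_(y | f y x) s y)
              + (t x * (deg f x)%:R - \sum_(y | f y x) t y)); first by ring.
by rewrite s_eig t_eig; ring.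
Qed.

Lemma sum_enum_rank (F : 'I_#|T| -> R) : \sum_i F i = \sum_x F (enum_rank x).
Proof. exact: (reindex enum_rank (onW_bij _ (enum_rank_bij T))). Qed.

Lemma colP_enum_rank (c d : 'cV[R]_#|T|) :
  (forall x, c (enum_rank x) 0 = d (enum_rank x) 0) -> c = d.
Proof. by move=> cd; apply/colP => i; rewrite -[i]enum_valK cd. Qed.

Lemma oppmxE m p (A : 'M[R]_(m, p)) i j : (- A) i j = - A i j.
Proof. by rewrite mxE. Qed.

Lemma row_of_funE (s : T -> R) x :
  (\row_i s (enum_val i) : 'rV_#|T|) 0 (enum_rank x) = s x.
Proof. by rewrite mxE enum_rankK. Qed.

Lemma mulmx_row_colE (r : 'rV[R]_#|T|) (c : 'cV[R]_#|T|) :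
  (r *m c) 0 0 = \sum_x r 0 (enum_rank x) * c (enum_rank x) 0.
Proof. by rewrite mxE sum_enum_rank. Qed.

Lemma mulmx_row_deltaE (r : 'rV[R]_#|T|) x :
  (r *m delta_mx (enum_rank x) (0 : 'I_1)) 0 0 = r 0 (enum_rank x).
Proof. by rewrite -colE mxE. Qed.

Lemma lap_mulmx_row (r : 'rV[R]_#|T|) x :
  (r *m lap R f) 0 (enum_rank x) =
  r 0 (enum_rank x) * (deg f x)%:R - \sum_(y | f y x) r 0 (enum_rank y).
Proof.
rewrite mxE sum_enum_rank.
under eq_bigr => y _ do rewrite mxE !enum_rankK (inj_eq enum_rank_inj) mulrBr.
rewrite sumrB (bigD1 x) //= eqxx big1 ?addr0 => [|y /negbTE yx]; last first.
  by rewrite yx mulr0.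
congr (_ - _); rewrite [RHS]big_mkcond; apply: eq_bigr => y _.
by case: (f y x); rewrite ?mulr1 ?mulr0.
Qed.

Lemma eigenspace_lapP (r : 'rV[R]_#|T|) mu :
  (r <= eigenspace (lap R f) mu)%MS <-> lap_eigenfun mu (fun x => r 0 (enum_rank x)).
Proof.
split=> [/eigenspaceP r_eig x | r_eig]; first by rewrite -lap_mulmx_row r_eig mxE.
by apply/eigenspaceP/rowP => i; rewrite -[i]enum_valK lap_mulmx_row r_eig mxE.
Qed.

Lemma lap_eigenfun_eigenspace mu s :
  lap_eigenfun mu s -> (\row_i s (enum_val i) <= eigenspace (lap R f) mu)%MS.
Proof.
move=> s_eig; apply/eigenspace_lapP/(lap_eigenfun_ext _ s_eig) => x.
by rewrite row_of_funE.
Qed.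

Lemma Eu_eigenfun mu u : lap_eigenfun mu (fun x => Eu f mu u (enum_rank x) 0).
Proof.
have /eigenspace_lapP :=
  orthproj_sub (eigenspace (lap R f) mu) (delta_mx (enum_rank u) 0).
by apply: lap_eigenfun_ext => x; rewrite mxE.
Qed.

Lemma sum_eigenfun_Eu mu u s :
  lap_eigenfun mu s -> \sum_x s x * Eu f mu u (enum_rank x) 0 = s u.
Proof.
move=> /lap_eigenfun_eigenspace /(orthproj_perp (delta_mx (enum_rank u) 0)).
rewrite mulmxBr => /eqP; rewrite subr_eq0 => /eqP /matrixP /(_ 0 0).
rewrite mulmx_row_deltaE mulmx_row_colE -/(Eu f mu u) row_of_funE => ->.
by apply: eq_bigr => x _; rewrite row_of_funE.
Qed.

Lemma Eu_unique mu u (z : T -> R) : lap_eigenfun mu z ->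
    (forall s, lap_eigenfun mu s -> \sum_x s x * z x = s u) ->
  forall x, Eu f mu u (enum_rank x) 0 = z x.
Proof.
move=> z_eig z_dot x.
suff -> : Eu f mu u = (\row_i z (enum_val i))^T by rewrite mxE row_of_funE.
apply: orthproj_unique => [|r /eigenspace_lapP /z_dot r_dot].
  by rewrite trmxK lap_eigenfun_eigenspace.
apply/matrixP => i j; rewrite !ord1 mulmxBr [RHS]mxE [LHS]mxE mulmx_row_deltaE.
rewrite mxE mulmx_row_colE -r_dot -sumrB big1 // => y _.
by rewrite mxE row_of_funE subrr.
Qed.

Lemma in_suppE u (mu : R) : in_supp f u mu = (Eu f mu u != 0).
Proof.
rewrite /in_supp /in_spec; apply/andP/idP => [[] //|Eu_nz]; split=> //.
apply/eigenvalueP; exists (Eu f mu u)^T; last by rewrite trmx_eq0.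
exact/eigenspaceP/orthproj_sub.
Qed.

End LaplacianEigenfunctions.

Section Blowup.
Variables (R : rcfType) (V : finType) (e : rel V) (n : nat).
Hypothesis n_gt0 : (0 < n)%N.
Local Notation N := (n%:R : R).
Implicit Types (l m a b : 'I_n) (u v w : V) (mu : R) (y : 'I_n * V) (s : 'I_n * V -> R).

Lemma natr_n_neq0 : N != 0.
Proof. by rewrite pnatr_eq0 -lt0n. Qed.

Lemma deg_blowup l u : deg (blowup n e) (l, u) = (n * deg e u)%N.
Proof.
rewrite /deg (_ : [set w | _] = setX [set: 'I_n] [set w | e u w]).
  by rewrite cardsX cardsT card_ord.
by apply/setP => -[a v]; rewrite !inE.
Qed.

Definition fiber_sum s v : R := \sum_m s (m, v).

Lemma blowup_eigenfunP mu s : lap_eigenfun (blowup n e) mu s <->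
  forall m w, s (m, w) * (N * (deg e w)%:R) - \sum_(v | e v w) fiber_sum s v
              = mu * s (m, w).
Proof.
have sumE m w : \sum_(y | blowup n e y (m, w)) s y = \sum_(v | e v w) fiber_sum s v.
  rewrite exchange_big pair_big /=.
  by apply: eq_big => [[a v]|[a v] _].
split=> [s_eig m w | s_eig [m w]].
  by have := s_eig (m, w); rewrite deg_blowup natrM sumE.
by rewrite deg_blowup natrM sumE.
Qed.

Lemma fiber_sum_eigenfun mu s :
  lap_eigenfun (blowup n e) mu s -> lap_eigenfun e (mu / N) (fiber_sum s).
Proof.
move=> /blowup_eigenfunP s_eig w.
have : \sum_(m < n) (s (m, w) * (N * (deg e w)%:R) - \sum_(v | e v w) fiber_sum s v)
       = \sum_(m < n) mu * s (m, w) by apply: eq_bigr => m _; exact: s_eig.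
rewrite sumrB -mulr_suml -mulr_sumr sumr_const card_ord -/(fiber_sum s w).
move: (fiber_sum s w) (\sum_(v | _) _) => S Sadj fiber_eq.
have N_nz := natr_n_neq0; apply: (mulfI N_nz).
transitivity (S * (N * (deg e w)%:R) - Sadj *+ n).
  by rewrite -[Sadj *+ n]mulr_natl; ring.
by rewrite fiber_eq; field.
Qed.

Lemma blowup_eigenfun_avg mu s m w : lap_eigenfun (blowup n e) mu s ->
  mu != N * (deg e w)%:R -> s (m, w) = N^-1 * fiber_sum s w.
Proof.
move=> s_eig mu_ndeg; have := fiber_sum_eigenfun s_eig w.
move/blowup_eigenfunP/(_ m w): s_eig.
move: (s (m, w)) (fiber_sum s w) (\sum_(v | _) _) => x S Sadj x_eq S_eq.
have N_nz := natr_n_neq0.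
have : (x - N^-1 * S) * (N * (deg e w)%:R - mu) = 0.
  transitivity ((x * (N * (deg e w)%:R) - Sadj - mu * x)
                - N^-1 * (S * (deg e w)%:R - Sadj - mu / N * S) * N); first by field.
  by rewrite x_eq S_eq; ring.
by move/eqP; rewrite mulf_eq0 !subr_eq0 [_ == mu]eq_sym (negbTE mu_ndeg) orbF => /eqP.
Qed.

Lemma lift_eigenfun mu p :
  lap_eigenfun e (mu / N) p -> lap_eigenfun (blowup n e) mu (fun y => p y.2).
Proof.
move=> p_eig; apply/blowup_eigenfunP => m w /=.
under eq_bigr => v _ do rewrite /fiber_sum /= sumr_const card_ord -mulr_natl.
by rewrite -mulr_sumr mulrCA -mulrBr p_eig mulrA [N * _]mulrC divfK ?natr_n_neq0.
Qed.

Lemma fiber_eigenfun u (g : 'I_n -> R) : \sum_m g m = 0 ->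
  lap_eigenfun (blowup n e) (N * (deg e u)%:R) (fun y => g y.1 * (y.2 == u)%:R).
Proof.
move=> g0; apply/blowup_eigenfunP => m w /=.
rewrite big1 ?subr0 => [|v _]; last by rewrite /fiber_sum /= -mulr_suml g0 mul0r.
by case: eqP => [->|_]; rewrite ?mulr0 ?mul0r ?subrr // mulr1 mulrC.
Qed.

Lemma sum_pairE (F : 'I_n * V -> R) : \sum_y F y = \sum_m \sum_v F (m, v).
Proof. by rewrite pair_bigA; apply: eq_bigr => -[]. Qed.

Lemma sum_mul_fiber_sum s (h : V -> R) :
  \sum_y s y * h y.2 = \sum_v fiber_sum s v * h v.
Proof.
rewrite sum_pairE exchange_big /=; apply: eq_bigr => v _.
by rewrite /fiber_sum mulr_suml.
Qed.

Lemma sum_mul_fiber s (g : 'I_n -> R) u :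
  \sum_y s y * (g y.1 * (y.2 == u)%:R) = \sum_m s (m, u) * g m.
Proof.
rewrite sum_pairE /=; apply: eq_bigr => m _.
rewrite (bigD1 u) //= eqxx mulr1 big1 ?addr0 // => v /negbTE ->.
by rewrite !mulr0.
Qed.

Lemma sum_mul_centered_delta (F : 'I_n -> R) l :
  \sum_m F m * ((l == m)%:R - N^-1) = F l - N^-1 * \sum_m F m.
Proof.
under eq_bigr => m _ do rewrite mulrBr.
rewrite sumrB mulr_sumr; congr (_ - _); last by apply: eq_bigr => m _; rewrite mulrC.
rewrite (bigD1 l) //= eqxx mulr1 big1 ?addr0 // => m /negbTE.
by rewrite eq_sym => ->; rewrite mulr0.
Qed.

Lemma Eu_blowupE mu l u y :
  Eu (blowup n e) mu (l, u) (enum_rank y) 0 =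
  N^-1 * Eu e (mu / N) u (enum_rank y.2) 0
  + (mu == N * (deg e u)%:R)%:R * ((l == y.1)%:R - N^-1) * (y.2 == u)%:R.
Proof.
set c := (mu == _)%:R; set p := fun v => Eu e (mu / N) u (enum_rank v) 0.
set g := fun m => c * ((l == m)%:R - N^-1).
have g0 : \sum_m g m = 0.
  rewrite (sum_mul_centered_delta (fun=> c)) sumr_const card_ord -[c *+ n]mulr_natl.
  by rewrite mulKf ?natr_n_neq0 ?subrr.
apply: (Eu_unique (z := fun y => N^-1 * p y.2 + g y.1 * (y.2 == u)%:R)).
  apply: lap_eigenfun_lin; first exact/lift_eigenfun/Eu_eigenfun.
  have [mu_deg|mu_ndeg] := eqVneq mu (N * (deg e u)%:R).
    by rewrite [X in lap_eigenfun _ X]mu_deg; exact: fiber_eigenfun.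
  apply: lap_eigenfun_ext (lap_eigenfun0 _ mu) => x.
  by rewrite /g /c (negbTE mu_ndeg) !mul0r.
move=> s s_eig; under eq_bigr do rewrite mulrDr.
rewrite big_split /= (sum_mul_fiber_sum s (fun v => N^-1 * p v)) sum_mul_fiber.
under eq_bigr do rewrite mulrCA.
rewrite -mulr_sumr sum_eigenfun_Eu; last exact: fiber_sum_eigenfun.
under eq_bigr do rewrite mulrCA.
rewrite -mulr_sumr sum_mul_centered_delta -/(fiber_sum s u).
have [mu_deg|mu_ndeg] := eqVneq mu (N * (deg e u)%:R).
  by rewrite /c mu_deg eqxx mul1r addrC subrK.
by rewrite /c (negbTE mu_ndeg) (blowup_eigenfun_avg l s_eig mu_ndeg); ring.
Qed.

Lemma Eu_blowup_sub mu l u a b w :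
  Eu (blowup n e) mu (l, u) (enum_rank (a, w)) 0
  - Eu (blowup n e) mu (l, u) (enum_rank (b, w)) 0
  = (mu == N * (deg e u)%:R)%:R * ((l == a)%:R - (l == b)%:R) * (w == u)%:R.
Proof. by rewrite !Eu_blowupE /=; ring. Qed.

End Blowup.

Section BlowupCospectral.
Variables (R : rcfType) (V : finType) (e : rel V) (n : nat).
Hypothesis n_gt1 : (1 < n)%N.
Local Notation N := (n%:R : R).
Implicit Types (l m b : 'I_n) (u v : V).

Lemma exists_ord_neq (l : 'I_n) : exists b : 'I_n, b != l.
Proof.
have /card_gt0P [b] : (0 < #|[set~ l]|)%N by rewrite cardsC1 card_ord -subn1 subn_gt0.
by rewrite !inE; exists b.
Qed.

Lemma Eu_blowup_deg_sub l u b : b != l ->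
  Eu (blowup n e) (N * (deg e u)%:R) (l, u) (enum_rank (l, u)) 0
  - Eu (blowup n e) (N * (deg e u)%:R) (l, u) (enum_rank (b, u)) 0 = 1.
Proof.
move=> /negbTE bl; rewrite Eu_blowup_sub ?(ltnW n_gt1) //.
by rewrite eq_sym bl !eqxx subr0 !mulr1.
Qed.

Lemma in_supp_blowup_deg l u : in_supp (blowup n e) (l, u) (N * (deg e u)%:R).
Proof.
have [b bl] := exists_ord_neq l; rewrite in_suppE; apply/eqP => E0.
have := Eu_blowup_deg_sub u bl; rewrite E0 !mxE subrr => /eqP.
by rewrite eq_sym oner_eq0.
Qed.

Lemma blowup_strongly_cospectral_fiber l u m v : (l, u) != (m, v) ->
    strongly_cospectral R (blowup n e) (l, u) (m, v) ->
  v = u /\ forall b, b != l -> m = b.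
Proof.
move=> lu_neq_mv /(_ _ (in_supp_blowup_deg l u)) Emv_pm.
have Emv_sub b : b != l ->
    (N * (deg e u)%:R == N * (deg e v)%:R)%:R * ((m == l)%:R - (m == b)%:R)
                             * (u == v)%:R != 0 :> R.
  move=> bl; rewrite -Eu_blowup_sub ?(ltnW n_gt1) //.
  case: Emv_pm => [<-|Elu]; first by rewrite Eu_blowup_deg_sub ?oner_eq0.
  rewrite -[Eu _ _ (m, v)]opprK -Elu !oppmxE -opprD oppr_eq0.
  by rewrite Eu_blowup_deg_sub ?oner_eq0.
have [b0 b0l] := exists_ord_neq l.
have vu : v = u.
  move: (Emv_sub b0 b0l).
  by rewrite mulf_eq0 negb_or pnatr_eq0 eqb0 negbK => /andP[_ /eqP].
split=> // b bl; move: (Emv_sub b bl).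
rewrite !mulf_eq0 !negb_or => /andP[/andP[_ +] _].
have /negbTE -> : m != l by apply: contraNneq lu_neq_mv => ->; rewrite vu.
by rewrite sub0r oppr_eq0 pnatr_eq0 eqb0 negbK => /eqP.
Qed.

End BlowupCospectral.

Lemma blowup_not_strongly_cospectral (R : rcfType) (V : finType) (e : rel V) n :
  (3 <= n)%N -> forall x y : 'I_n * V, x != y ->
  ~ strongly_cospectral R (blowup n e) x y.
Proof.
move=> n_ge3 [l u] [m v] xy.
move=> /(blowup_strongly_cospectral_fiber (ltnW n_ge3) xy) [_ fiber_m].
have : [set~ l] \subset [set m] by apply/subsetP => b; rewrite !inE => /fiber_m ->.
move/subset_leq_card; rewrite cardsC1 cards1 card_ord.
by rewrite -subn1 leq_subLR leqNgt n_ge3.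
Qed.

Section DoubleBlowup.
Variables (R : rcfType) (V : finType) (e : rel V).
Implicit Types (u : V) (mu : R) (y : 'I_2 * V).
Local Notation E2 mu l u := (Eu (blowup 2 e) (mu : R) (l, u)).

Let two_neq0 : 2 != 0 :> R. Proof. by rewrite pnatr_eq0. Qed.

Lemma mulKr2 (x : R) : 2 * x / 2 = x.
Proof. by rewrite mulrC mulKf. Qed.

Lemma Eu_blowup2D mu u y :
  E2 mu zero2 u (enum_rank y) 0 + E2 mu one2 u (enum_rank y) 0
  = Eu e (mu / 2) u (enum_rank y.2) 0.
Proof.
rewrite !Eu_blowupE //.
have -> : (one2 == y.1)%:R = 1 - (zero2 == y.1)%:R :> R.
  by case: y => -[[|[|k]] ? ?] //=; rewrite ?subrr ?subr0.
by field.
Qed.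

Lemma Eu_blowup2_eq mu u : (E2 mu zero2 u == E2 mu one2 u) = (mu != 2 * (deg e u)%:R).
Proof.
have [mu_deg|mu_ndeg] := eqVneq mu (2 * (deg e u)%:R) => /=.
  apply/negbTE/eqP => E.
  have := Eu_blowup_sub e (isT : (0 < 2)%N) mu zero2 u zero2 one2 u.
  by rewrite E Eu_blowup_sub // mu_deg !eqxx /=; lra.
apply/eqP/colP_enum_rank => y.
by rewrite !Eu_blowupE // (negbTE mu_ndeg) !mul0r.
Qed.

Lemma Eu_blowup2_eqN mu u :
  (E2 mu zero2 u == - E2 mu one2 u) = (Eu e (mu / 2) u == 0).
Proof.
apply/eqP/eqP => E.
  apply: colP_enum_rank => w; rewrite -(Eu_blowup2D mu u (zero2, w)) E oppmxE addNr.
  by rewrite mxE.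
apply: colP_enum_rank => y; apply/eqP.
by rewrite oppmxE -subr_eq0 opprK Eu_blowup2D E mxE.
Qed.

Lemma Eu_blowup2_eq0 mu u :
  (E2 mu zero2 u == 0) = (Eu e (mu / 2) u == 0) && (mu != 2 * (deg e u)%:R).
Proof.
have [mu_deg|mu_ndeg] := eqVneq mu (2 * (deg e u)%:R); rewrite ?andbF ?andbT.
  by apply/negbTE; rewrite -in_suppE mu_deg; exact: in_supp_blowup_deg.
have Ex_half y :
    E2 mu zero2 u (enum_rank y) 0 = 2^-1 * Eu e (mu / 2) u (enum_rank y.2) 0.
  by rewrite Eu_blowupE // (negbTE mu_ndeg) !mul0r addr0.
apply/eqP/eqP => E.
  apply: colP_enum_rank => w; have := Ex_half (zero2, w).
  by rewrite E !mxE => /esym/eqP; rewrite mulf_eq0 invr_eq0 (negbTE two_neq0) => /eqP.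
by apply: colP_enum_rank => y; rewrite Ex_half E !mxE mulr0.
Qed.

Lemma blowup2_strongly_cospectralE u :
  strongly_cospectral R (blowup 2 e) (zero2, u) (one2, u) <->
  Eu e ((deg e u)%:R : R) u = 0.
Proof.
split=> [sc | Eu0 mu _].
  case: (sc (2 * (deg e u)%:R)) => [|/eqP|/eqP].
  - by rewrite in_suppE Eu_blowup2_eq0 eqxx andbF.
  - by rewrite Eu_blowup2_eq eqxx.
  - by rewrite Eu_blowup2_eqN mulKr2 => /eqP.
have [mu_deg|mu_ndeg] := eqVneq mu (2 * (deg e u)%:R).
  by right; apply/eqP; rewrite Eu_blowup2_eqN mu_deg mulKr2 Eu0.
by left; apply/eqP; rewrite Eu_blowup2_eq mu_ndeg.
Qed.

Lemma blowup2_sigma_plus u mu : Eu e ((deg e u)%:R : R) u = 0 ->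
  in_sigma_plus (blowup 2 e) (zero2, u) (one2, u) mu <->
  exists2 m : R, in_supp e u m & mu = 2 * m.
Proof.
move=> Eu0; rewrite /in_sigma_plus Eu_blowup2_eq Eu_blowup2_eq0 negb_and negbK.
have [mu_deg|mu_ndeg] := eqVneq mu (2 * (deg e u)%:R) => /=.
  split=> // -[m]; rewrite in_suppE mu_deg => Em /(mulfI two_neq0) md.
  by rewrite -md Eu0 eqxx in Em.
rewrite orbF; split=> [Ep | [m + ->]]; last by rewrite in_suppE mulKr2.
by exists (mu / 2); rewrite ?in_suppE // mulrC divfK.
Qed.

Lemma blowup2_sigma_minus u mu : Eu e ((deg e u)%:R : R) u = 0 ->
  in_sigma_minus (blowup 2 e) (zero2, u) (one2, u) mu <-> mu = 2 * (deg e u)%:R.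
Proof.
move=> Eu0; rewrite /in_sigma_minus Eu_blowup2_eqN Eu_blowup2_eq0 negb_and negbK.
have [->|mu_ndeg] := eqVneq mu (2 * (deg e u)%:R); first by rewrite mulKr2 Eu0 eqxx.
by rewrite orbF andbN; split=> // mu_deg; rewrite mu_deg eqxx in mu_ndeg.
Qed.

End DoubleBlowup.

Theorem theorem2 (R : rcfType) (V : finType) (e : rel V)
    (e_sym : symmetric e) (e_irr : irreflexive e) :
  (* (1) *)
  (forall n : nat, (3 <= n)%N -> forall x y : ('I_n * V)%type,
      x != y -> ~ strongly_cospectral R (blowup n e) x y)
  /\
  (* (2) *)
  (forall u : V,
     (strongly_cospectral R (blowup 2 e) (zero2, u) (one2, u)
        <-> ~~ in_supp e u ((deg e u)%:R : R))
     /\ (strongly_cospectral R (blowup 2 e) (zero2, u) (one2, u) ->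
          (forall l : R, in_sigma_plus (blowup 2 e) (zero2, u) (one2, u) l
                 <-> exists2 m : R, in_supp e u m & l = 2 * m)
          /\ (forall l : R, in_sigma_minus (blowup 2 e) (zero2, u) (one2, u) l
                 <-> l = 2 * (deg e u)%:R))
     /\ (forall y : ('I_2 * V)%type,
           y != (zero2, u) -> strongly_cospectral R (blowup 2 e) (zero2, u) y ->
           y = (one2, u))).
Proof.
split=> [n n_ge3|u]; first exact: blowup_not_strongly_cospectral.
have sc_iff := blowup2_strongly_cospectralE R e u.
split; first by rewrite in_suppE negbK sc_iff; split=> /eqP.
split=> [/sc_iff Eu0 | [m v] neq sc].
  by split=> mu; [exact: blowup2_sigma_plus | exact: blowup2_sigma_minus].
rewrite eq_sym in neq.
have [-> /(_ one2 isT) ->] //:=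
  blowup_strongly_cospectral_fiber (isT : (1 < 2)%N) neq sc.
Qed.
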